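(* For all $u,v\in\mathfrak{A}^0_{\mathrm{G}}$, we have $u\sqcup\!\sqcup v\in\mathfrak{A}^0_{\mathrm{G}}$.
   Context: $\mathbb{Q}\langle\pi,y\rangle$ is the free noncommutative $\mathbb{Q}$-algebra on $\pi,y$ with unit $\mathbf{1}$, and $\rho=\pi-\mathbf{1}$. For integers $0\le t\le s$ set $z_{t,s}=\rho^t\pi^{s-t}y$. $\mathfrak{A}^0_{\mathrm{G}}$ is the $\mathbb{Q}$-span in $\mathbb{Q}\langle\pi,y\rangle$ of all products $z_{t_1,s_1}z_{t_2,s_2}\cdots z_{t_d,s_d}$ ($d\ge1$) with $1\le t_1\le s_1$ and $0\le t_j\le s_j$ for $j\ge2$. The shuffle $\sqcup\!\sqcup$ is the bilinear product on $\mathbb{Q}\langle\pi,y\rangle$ with $\mathbf{1}\sqcup\!\sqcup u=u\sqcup\!\sqcup\mathbf{1}=u$, $(yu)\sqcup\!\sqcup v=u\sqcup\!\sqcup(yv)=y(u\sqcup\!\sqcup v)$, $\pi u\sqcup\!\sqcup\pi v=\pi(u\sqcup\!\sqcup\pi v)+\pi(\pi u\sqcup\!\sqcup v)-\pi(u\sqcup\!\sqcup v)$ for words $u,v$. *)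

From HB Require Import structures.
From mathcomp Require Import all_boot all_order all_algebra.
From mathcomp Require Import finmap.
From mathcomp.multinomials Require Import monalg.

Set Implicit Arguments.
Unset Strict Implicit.
Unset Printing Implicit Defensive.

Import GRing.Theory.
Local Open Scope ring_scope.

(* Letters: [true] stands for pi, [false] stands for y.  Words are [seq bool]. *)
(* The free noncommutative Q-algebra Q<pi,y> is the monoid algebra of the
   free monoid {fmonom bool} with rational coefficients. *)
Definition QPY := {malg rat[{fmonom bool}]}.

Definition pi_ : QPY := << fmu true >>.
Definition y_ : QPY := << fmu false >>.
Definition rho : QPY := pi_ - 1.

Definition letter (a : bool) : QPY := if a then pi_ else y_.
Definition word (w : seq bool) : QPY := \prod_(a <- w) letter a.

(* shuffle of two words, by the recursive rules of the paper:
   1 sh v = v, u sh 1 = u,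
   (y u) sh v = u sh (y v) = y (u sh v),
   (pi u) sh (pi v) = pi(u sh pi v) + pi(pi u sh v) - pi(u sh v). *)
Fixpoint shw (u : seq bool) : seq bool -> QPY :=
  match u with
  | [::] => fun v => word v
  | a :: u' =>
      fix shv (v : seq bool) : QPY :=
        match v with
        | [::] => word (a :: u')
        | b :: v' =>
            if ~~ a then y_ * shw u' v
            else if ~~ b then y_ * shv v'
            else pi_ * shw u' v + pi_ * shv v' - pi_ * shw u' v'
        end
  end.

Definition shuffle (f g : QPY) : QPY :=
  \sum_(m <- msupp f) \sum_(n <- msupp g)
     (f@_m * g@_n) *: shw (fmonom_val m) (fmonom_val n).

Definition z (t s : nat) : QPY := rho ^+ t * pi_ ^+ (s - t) * y_.

Definition admissible (ix : seq (nat * nat)) : bool :=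
  match ix with
  | [::] => false
  | p :: ix' => (0 < p.1)%N && (p.1 <= p.2)%N && all (fun q => (q.1 <= q.2)%N) ix'
  end.

Definition zprod (ix : seq (nat * nat)) : QPY := \prod_(q <- ix) z q.1 q.2.

Definition inA0G (u : QPY) : Prop :=
  exists c : seq (rat * seq (nat * nat)),
    all (fun p => admissible p.2) c /\ u = \sum_(p <- c) p.1 *: zprod p.2.

From HB Require Import structures.
From mathcomp Require Import all_boot all_order all_algebra.
From mathcomp Require Import finmap.
From mathcomp.multinomials Require Import monalg.

Set Implicit Arguments.
Unset Strict Implicit.
Unset Printing Implicit Defensive.

Import GRing.Theory.
Local Open Scope ring_scope.

(* Let Y be the span of the words ending in y.  A product z_{t_1,s_1} ... with
   t_1 >= 1 is rho times an element of Y, and conversely rho pi^k y w =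
   z_{1,k+1} w where the word w, cut after each y, is a product of blocks
   pi^k y = z_{0,k}; hence A^0_G = rho Y.  As rho = pi - 1, the pi-pi rule of
   the shuffle gives, for words u and v,
     (rho u) sh (rho v) = rho (u sh pi v + pi u sh v - u sh v),
   and every shuffle of nonempty words ending in y lies in Y. *)

Section MalgBilinear.
Variables (K : choiceType) (R : comNzRingType) (V : lmodType R).
Variable F : K -> K -> V.

Definition malg_bilin (f g : {malg R[K]}) : V :=
  \sum_(m <- msupp f) \sum_(n <- msupp g) (f@_m * g@_n) *: F m n.

Lemma malg_bilinEw (d1 d2 : {fset K}) f g :
  (msupp f `<=` d1)%fset -> (msupp g `<=` d2)%fset ->
  malg_bilin f g = \sum_(m <- d1) \sum_(n <- d2) (f@_m * g@_n) *: F m n.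
Proof.
move=> le1 le2; rewrite /malg_bilin (big_fset_incl _ le1); last first.
  move=> m _ /mcoeff_outdom->.
  by rewrite big1 // => n _; rewrite mul0r scale0r.
apply: eq_bigr => m _; rewrite (big_fset_incl _ le2) // => n _ /mcoeff_outdom->.
by rewrite mulr0 scale0r.
Qed.

Lemma malg_bilin_is_bilinear : bilinear_for *:%R *:%R malg_bilin.
Proof.
split=> [g a f1 f2 | f a g1 g2] /=.
- pose d := (msupp f1 `|` msupp f2)%fset.
  have le_d : (msupp (a *: f1 + f2) `<=` d)%fset.
    by apply: fsubset_trans (msuppD_le _ _) (fsetSU _ (msuppZ_le _ _)).
  rewrite (malg_bilinEw le_d (fsubset_refl _)).
  have le1 : (msupp f1 `<=` d)%fset := fsubsetUl _ _.
  have le2 : (msupp f2 `<=` d)%fset := fsubsetUr _ _.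
  rewrite (malg_bilinEw le1 (fsubset_refl _)) (malg_bilinEw le2 (fsubset_refl _)).
  rewrite scaler_sumr -big_split; apply: eq_bigr => m _ /=.
  rewrite scaler_sumr -big_split; apply: eq_bigr => n _ /=.
  by rewrite mcoeffD mcoeffZ mulrDl scalerDl -mulrA scalerA.
- pose d := (msupp g1 `|` msupp g2)%fset.
  have le_d : (msupp (a *: g1 + g2) `<=` d)%fset.
    by apply: fsubset_trans (msuppD_le _ _) (fsetSU _ (msuppZ_le _ _)).
  rewrite (malg_bilinEw (fsubset_refl _) le_d).
  have le1 : (msupp g1 `<=` d)%fset := fsubsetUl _ _.
  have le2 : (msupp g2 `<=` d)%fset := fsubsetUr _ _.
  rewrite (malg_bilinEw (fsubset_refl _) le1) (malg_bilinEw (fsubset_refl _) le2).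
  rewrite scaler_sumr -big_split; apply: eq_bigr => m _ /=.
  rewrite scaler_sumr -big_split; apply: eq_bigr => n _ /=.
  by rewrite mcoeffD mcoeffZ mulrDr scalerDl mulrCA scalerA.
Qed.

End MalgBilinear.

Section MalgAlgebra.
Variables (K : monomType) (R : comNzRingType).

Lemma mul_malgCr (c : R) (x : {malg R[K]}) : x * c%:MP = c *: x.
Proof.
rewrite malgM_def fgmulgU malgZ_def; apply: eq_bigr => k _.
by rewrite mulm1 mulrC.
Qed.

Lemma malg_scalerAr (c : R) (x y : {malg R[K]}) : c *: (x * y) = x * (c *: y).
Proof. by rewrite scalerAl -(mul_malgCr c x) -mulrA mul_malgC. Qed.

Lemma malg_basisE (x : {malg R[K]}) : x = \sum_(k <- msupp x) x@_k *: << k >>.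
Proof.
rewrite {1}(monalgE x); apply: eq_bigr => k _.
by rewrite -mul_malgC malgM_def fgmulUU mulr1 mul1m.
Qed.

Lemma mul_malg_basisE (g x : {malg R[K]}) :
  g * x = \sum_(k <- msupp x) x@_k *: (g * << k >>).
Proof.
rewrite {1}[x]malg_basisE mulr_sumr; apply: eq_bigr => k _.
by rewrite malg_scalerAr.
Qed.

End MalgAlgebra.

HB.instance Definition _ := bilinear_isBilinear.Build rat QPY QPY QPY *:%R *:%R
  shuffle (malg_bilin_is_bilinear (fun m n : {fmonom bool} => shw m n)).

Lemma shuffleBl (g f1 f2 : QPY) : shuffle (f1 - f2) g = shuffle f1 g - shuffle f2 g.
Proof. exact: linearBl. Qed.

Lemma shuffleBr (f g1 g2 : QPY) : shuffle f (g1 - g2) = shuffle f g1 - shuffle f g2.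
Proof. exact: linearBr. Qed.

Lemma shuffleZl (g : QPY) (c : rat) (f : QPY) : shuffle (c *: f) g = c *: shuffle f g.
Proof. exact: linearZl_LR. Qed.

Lemma shuffleZr (f : QPY) (c : rat) (g : QPY) : shuffle f (c *: g) = c *: shuffle f g.
Proof. exact: linearZr_LR. Qed.

Lemma shuffle_suml (I : Type) (r : seq I) (F : I -> QPY) (g : QPY) :
  shuffle (\sum_(i <- r) F i) g = \sum_(i <- r) shuffle (F i) g.
Proof. exact: linear_sumlz. Qed.

Lemma shuffle_sumr (I : Type) (r : seq I) (f : QPY) (F : I -> QPY) :
  shuffle f (\sum_(i <- r) F i) = \sum_(i <- r) shuffle f (F i).
Proof. exact: linear_sumr. Qed.


Lemma letterE (a : bool) : letter a = << fmu a >>.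
Proof. by case: a. Qed.

Lemma mul_letter_monomial (a : bool) (m : {fmonom bool}) :
  letter a * << m >> = << FMonom (a :: m) >>.
Proof.
rewrite letterE malgM_def fgmulUU mulr1.
by congr << _ >>; apply: val_inj; rewrite /= fmM fmU.
Qed.

Lemma word_monomial (w : seq bool) : word w = << FMonom w >>.
Proof.
elim: w => [|a w IHw]; last by rewrite /word big_cons -/(word w) IHw mul_letter_monomial.
by rewrite /word big_nil -mpolyC1E; congr << _ >>; apply: val_inj; rewrite /= fm1.
Qed.

Lemma rho_mul_monomial (m : {fmonom bool}) :
  rho * << m >> = << FMonom (true :: m) >> - << m >>.
Proof. by rewrite mulrBl mul1r (mul_letter_monomial true). Qed.

Lemma shw_pi_pi (u v : seq bool) :
  shw (true :: u) (true :: v)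
  = pi_ * shw u (true :: v) + pi_ * shw (true :: u) v - pi_ * shw u v.
Proof. by []. Qed.

Lemma shuffle_monomial (m n : {fmonom bool}) : shuffle << m >> << n >> = shw m n.
Proof. by rewrite /shuffle !msuppU1 !big_seq_fset1 !mcoeffU1 !eqxx mulr1 scale1r. Qed.

Lemma shuffle_rho_monomial (m n : {fmonom bool}) :
  shuffle (rho * << m >>) (rho * << n >>)
  = rho * (shw m (true :: n) + shw (true :: m) n - shw m n).
Proof.
rewrite !rho_mul_monomial shuffleBl !shuffleBr !shuffle_monomial shw_pi_pi.
rewrite mulrBl mul1r !mulrDr mulrN -addrA; congr (_ + _).
by rewrite addrC -opprD addrAC.
Qed.

(* [last b w] is the last letter of [w], or [b] if [w] is empty; [false] is y. *)
Definition y_final (w : seq bool) : bool := ~~ last true w.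

Definition nil_or_y_final (w : seq bool) : bool := ~~ last false w.

Lemma y_final_nil_or (w : seq bool) : y_final w -> nil_or_y_final w.
Proof. by case: w. Qed.

Lemma nil_or_y_final_cons (a : bool) (w : seq bool) :
  nil_or_y_final (a :: w) -> nil_or_y_final w.
Proof. by case: w. Qed.

Definition yspan (x : QPY) : Prop := {in msupp x, forall m : {fmonom bool}, y_final m}.

Lemma yspan0 : yspan 0.
Proof. by move=> m; rewrite msupp0 inE. Qed.

Lemma yspanD (x1 x2 : QPY) : yspan x1 -> yspan x2 -> yspan (x1 + x2).
Proof.
move=> y1 y2 m /(fsubsetP (msuppD_le x1 x2)); rewrite inE => /orP[].
  exact: y1.
exact: y2.
Qed.

Lemma yspanB (x1 x2 : QPY) : yspan x1 -> yspan x2 -> yspan (x1 - x2).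
Proof. by move=> y1 y2; apply: yspanD => // m; rewrite msuppN; apply: y2. Qed.

Lemma yspanZ (c : rat) (x : QPY) : yspan x -> yspan (c *: x).
Proof. by move=> yx m /(fsubsetP (msuppZ_le c x)); apply: yx. Qed.

Lemma yspanMl (g x : QPY) : yspan x -> yspan (g * x).
Proof.
move=> yx m /msuppM_le [k1 [k2 [_ /yx yk2 ->]]].
by rewrite /y_final fmM last_cat; case: (fmonom_val k2) yk2.
Qed.

Lemma yspan_word (w : seq bool) : y_final w -> yspan (word w).
Proof. by move=> yw m; rewrite word_monomial msuppU1 inE => /eqP ->. Qed.

Lemma yspan_y : yspan y_.
Proof. by move=> m; rewrite msuppU1 inE => /eqP ->; rewrite /y_final fmU. Qed.

Lemma yspan_shw (u v : seq bool) :
  nil_or_y_final u -> nil_or_y_final v -> (u != [::]) || (v != [::]) ->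
  yspan (shw u v).
Proof.
elim: u v => [|a u IHu] v yu; first by case: v => // b v yv _; apply: yspan_word.
have yu' := nil_or_y_final_cons yu.
elim: v => [|b v IHv] yv _; first exact: yspan_word.
have yv' := nil_or_y_final_cons yv.
have {}IHv := IHv yv' isT.
case: a yu IHv => yu IHv /=; last by apply: yspanMl; apply: IHu; rewrite ?orbT.
case: b yv IHv => yv IHv; last exact: yspanMl.
have u0 : u != [::] by apply: contraTneq yu => ->.
apply: yspanB; first apply: yspanD.
- by apply: yspanMl; apply: IHu; rewrite ?orbT.
- exact: yspanMl.
- by apply: yspanMl; apply: IHu; rewrite ?u0.
Qed.

Definition zspan (P : pred (seq (nat * nat))) (u : QPY) : Prop :=
  exists c : seq (rat * seq (nat * nat)),
    all (fun p => P p.2) c /\ u = \sum_(p <- c) p.1 *: zprod p.2.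

Section ZSpan.
Variable P : pred (seq (nat * nat)).

Lemma zspan0 : zspan P 0.
Proof. by exists [::]; rewrite big_nil. Qed.

Lemma zspanD (u v : QPY) : zspan P u -> zspan P v -> zspan P (u + v).
Proof.
move=> [c1 [P1 ->]] [c2 [P2 ->]]; exists (c1 ++ c2).
by rewrite all_cat P1 P2 big_cat.
Qed.

Lemma zspanZ (a : rat) (u : QPY) : zspan P u -> zspan P (a *: u).
Proof.
move=> [c [Pc ->]]; exists [seq (a * p.1, p.2) | p <- c]; rewrite all_map.
split=> //; rewrite big_map scaler_sumr; apply: eq_bigr => p _.
by rewrite scalerA.
Qed.

Lemma zspan_sum (I : eqType) (r : seq I) (F : I -> QPY) :
  (forall i, i \in r -> zspan P (F i)) -> zspan P (\sum_(i <- r) F i).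
Proof.
by move=> PF; rewrite big_seq; apply: big_ind => //; [apply: zspan0 | apply: zspanD].
Qed.

Lemma zspan1 : P [::] -> zspan P 1.
Proof. by exists [:: (1, [::])]; rewrite /= andbT big_seq1 scale1r /zprod big_nil. Qed.

Lemma zspan_mulz (Q : pred (seq (nat * nat))) (t s : nat) (u : QPY) :
  (forall r, Q r -> P ((t, s) :: r)) -> zspan Q u -> zspan P (z t s * u).
Proof.
move=> QP [c [Qc ->]]; exists [seq (p.1, (t, s) :: p.2) | p <- c].
rewrite all_map; split; first by apply: sub_all Qc => p /QP.
rewrite big_map mulr_sumr; apply: eq_bigr => p _.
by rewrite -malg_scalerAr /zprod big_cons.
Qed.

End ZSpan.

Definition weakly_admissible (ix : seq (nat * nat)) : bool :=
  all (fun q => q.1 <= q.2)%N ix.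

Lemma word_cons (a : bool) (w : seq bool) : word (a :: w) = letter a * word w.
Proof. by rewrite /word big_cons. Qed.

Lemma zspan_pi_word (k : nat) (w : seq bool) :
  y_final w -> zspan weakly_admissible (pi_ ^+ k * word w).
Proof.
elim: w k => [|[] w IHw] k //= yw.
  have -> : pi_ ^+ k * word (true :: w) = pi_ ^+ k.+1 * word w.
    by rewrite word_cons [LHS]mulrA -exprSr.
  exact: IHw.
have -> : pi_ ^+ k * word (false :: w) = z 0 k * word w.
  by rewrite word_cons /z expr0 mul1r subn0 [LHS]mulrA.
apply: (zspan_mulz (Q := weakly_admissible)) => //; case: w IHw yw => [_ _|b w IHw yw].
  by rewrite /word big_nil; apply: zspan1.
by have := IHw 0%N yw; rewrite expr0 mul1r.
Qed.

Lemma zspan_word (w : seq bool) : nil_or_y_final w -> zspan weakly_admissible (word w).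
Proof.
case: w => [_|a w yw]; first by rewrite /word big_nil; apply: zspan1.
by have := @zspan_pi_word 0 (a :: w) yw; rewrite expr0 mul1r.
Qed.

Lemma inA0G_rho_pi_word (k : nat) (w : seq bool) :
  y_final w -> inA0G (rho * (pi_ ^+ k * word w)).
Proof.
elim: w k => [|[] w IHw] k //= yw.
  have -> : pi_ ^+ k * word (true :: w) = pi_ ^+ k.+1 * word w.
    by rewrite word_cons [LHS]mulrA -exprSr.
  exact: IHw.
have -> : rho * (pi_ ^+ k * word (false :: w)) = z 1 k.+1 * word w.
  by rewrite word_cons /z expr1 subSS subn0 [LHS]mulrA [LHS]mulrA.
by apply: (zspan_mulz (Q := weakly_admissible)) => //; apply: zspan_word.
Qed.

Lemma inA0G_rho_yspan (x : QPY) : yspan x -> inA0G (rho * x).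
Proof.
move=> yx; rewrite mul_malg_basisE; apply: zspan_sum => m xm; apply: zspanZ.
have := inA0G_rho_pi_word 0 (yx m xm).
by rewrite expr0 mul1r word_monomial fmK.
Qed.

Lemma yspan_mulr_zprod (x : QPY) (r : seq (nat * nat)) :
  yspan x -> yspan (x * zprod r).
Proof.
elim: r x => [|q r IHr] x yx; first by rewrite /zprod big_nil mulr1.
rewrite /zprod big_cons mulrA; apply: IHr.
by rewrite /z mulrA; exact/yspanMl/yspan_y.
Qed.

Lemma inA0G_rho_dvd (u : QPY) : inA0G u -> exists2 x, yspan x & u = rho * x.
Proof.
move=> [c [adm_c ->]]; elim: c adm_c => [_|[a [|[[|t] s] r]] c IHc] //=.
  by exists 0; [exact: yspan0 | rewrite big_nil mulr0].
case/andP=> _ /IHc[x yx ex]; rewrite big_cons ex.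
exists (a *: (rho ^+ t * pi_ ^+ (s - t.+1) * y_ * zprod r) + x).
  by apply: yspanD => //; apply/yspanZ/yspan_mulr_zprod/yspanMl/yspan_y.
rewrite mulrDr -malg_scalerAr /zprod big_cons /z exprS /=.
by rewrite !mulrA.
Qed.

Lemma inA0G_shuffle_rho_monomial (m n : {fmonom bool}) :
  y_final m -> y_final n -> inA0G (shuffle (rho * << m >>) (rho * << n >>)).
Proof.
move=> ym yn; rewrite shuffle_rho_monomial; apply: inA0G_rho_yspan.
have ym0 := y_final_nil_or ym; have yn0 := y_final_nil_or yn.
have ym1 : nil_or_y_final (true :: m) := ym.
have yn1 : nil_or_y_final (true :: n) := yn.
have m0 : fmonom_val m != [::] by apply: contraTneq ym => ->.
by apply: yspanB; [apply: yspanD|]; apply: yspan_shw; rewrite ?m0 ?orbT.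
Qed.

Theorem proposition9p1 (u v : QPY) :
  inA0G u -> inA0G v -> inA0G (shuffle u v).
Proof.
move=> /inA0G_rho_dvd[x yx ->] /inA0G_rho_dvd[y yy ->].
rewrite [rho * x]mul_malg_basisE shuffle_suml; apply: zspan_sum => m xm.
rewrite shuffleZl; apply: zspanZ.
rewrite [rho * y]mul_malg_basisE shuffle_sumr; apply: zspan_sum => n yn.
rewrite shuffleZr; apply: zspanZ.
exact: inA0G_shuffle_rho_monomial (yx m xm) (yy n yn).
Qed.
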